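(* Let $\mathcal{T}$ be a tangle of order $k$ in a connectivity system $(E,\lambda)$, and let $\mathcal{S}$ be a tree compatible set. If $(R,G)$ is a $(k,\mathcal{S})$-separation, then there is an $\mathcal{S}$-tight $\mathcal{S}$-maximal $k$-flower in $\mathcal{T}$ that displays a $(k,\mathcal{S})$-separation that is $\mathcal{T}$-equivalent to $(R,G)$.
   Context: A connectivity system is a pair $(E,\lambda)$ with $E$ finite and $\lambda$ integer-valued, symmetric and submodular on subsets of $E$. $X$ is $k$-separating if $\lambda(X)\le k$; a $k$-separation is an unordered partition $(X,E-X)$ with $\lambda(X)\le k$. A tangle of order $k$ is a collection $\mathcal T$ of subsets of $E$ with (T1) $\lambda(A)<k$ for $A\in\mathcal T$; (T2) if $\lambda(A)\le k-1$ then $A$ or $E-A$ is in $\mathcal T$; (T3) $A\cup B\cup C\ne E$ for $A,B,C\in\mathcal T$; (T4) $E-\{e\}\notin\mathcal T$. A set is $\mathcal T$-weak if contained in a member of $\mathcal T$, otherwise $\mathcal T$-strong; partitions/$k$-separations are $\mathcal T$-strong if all parts are. A $\mathcal T$-strong $k$-separating $X$ is fully closed if $X\cup Y$ is not $k$-separating for every nonempty $\mathcal T$-weak $Y\subseteq E-X$; $\mathrm{fcl}_{\mathcal T}(X)$ is the intersection of all fully closed $k$-separating sets containing $X$. $\mathcal T$-strong $k$-separations $(X,Y),(X',Y')$ are $\mathcal T$-equivalent if $\{\mathrm{fcl}_{\mathcal T}(X),\mathrm{fcl}_{\mathcal T}(Y)\}=\{\mathrm{fcl}_{\mathcal T}(X'),\mathrm{fcl}_{\mathcal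 T}(Y')\}$. $X$ is $\mathcal T$-sequential if it is $k$-separating, $E-X$ is $\mathcal T$-strong and $\mathrm{fcl}_{\mathcal T}(E-X)=E$. $\mathcal S$ is a set of non-$\mathcal T$-sequential $k$-separating sets with $\mathcal T$-strong complements; a $(k,\mathcal S)$-separation is a $k$-separation $(X,E-X)$ with $X,E-X\in\mathcal S$; $\mathcal S$ is tree compatible if (S1) any $\mathcal T$-strong $k$-separation $\mathcal T$-equivalent to a $(k,\mathcal S)$-separation is one, and (S2) $X\in\mathcal S$, $(Y,E-Y)$ a $\mathcal T$-strong $k$-separation and $X\subseteq Y$ imply $Y\in\mathcal S$. A $k$-flower in $\mathcal T$ is a $\mathcal T$-strong partition $(P_1,\dots,P_n)$ of $E$ ($n\ge1$) with $P_i$ and $P_i\cup P_{i+1}$ $k$-separating for all $i$ (mod $n$); it displays $(X,E-X)$ if $X$ is a union of petals. $\Phi_1\preccurlyeq_{\mathcal S}\Phi_2$ if each $(k,\mathcal S)$-separation displayed by $\Phi_1$ is $\mathcal T$-equivalent to some $(k,\mathcal S)$-separation displayed by $\Phi_2$; equivalence means both directions; $\Phi$ is $\mathcal S$-tight if not equivalent to a $k$-flower with fewer petals, and $\mathcal S$-maximal if $\Phi\preccurlyeq_{\mathcal S}\Phi'$ implies $\Phi'\preccurlyeq_{\mathcal S}\Phi$. *)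

From mathcomp Require Import all_boot all_order all_algebra.
Set Implicit Arguments. Unset Strict Implicit. Unset Printing Implicit Defensive.
Import Order.TTheory GRing.Theory Num.Theory.
Local Open Scope ring_scope.

Section Tangles.
Variable E : finType.
Variable lam : {set E} -> int.
Variable k : int.

Definition connectivity_system : Prop :=
  (forall X : {set E}, lam X = lam (~: X)) /\
  (forall X Y : {set E}, lam (X :&: Y) + lam (X :|: Y) <= lam X + lam Y).

Definition ksep (X : {set E}) : bool := lam X <= k.

Definition tangle (T : {set {set E}}) : Prop :=
  [/\ (forall A, A \in T -> lam A < k),
      (forall A, lam A <= k - 1 -> A \in T \/ ~: A \in T),
      (forall A B C, A \in T -> B \in T -> C \in T -> A :|: B :|: C != setT)
    & (forall e : E, ~: [set e] \notin T)].

Variable T : {set {set E}}.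

Definition Tweak (Y : {set E}) : bool := [exists A in T, Y \subset A].
Definition Tstrong (Y : {set E}) : bool := ~~ Tweak Y.

Definition fully_closed (X : {set E}) : bool :=
  [&& Tstrong X, ksep X &
   [forall Y : {set E},
      ((Y != set0) && Tweak Y && (Y \subset ~: X)) ==> ~~ ksep (X :|: Y)]].

Definition fcl (X : {set E}) : {set E} :=
  \bigcap_(Z | fully_closed Z && (X \subset Z)) Z.

(* a k-separation (X, E - X) is represented by the set X *)
Definition Tstrong_ksep (X : {set E}) : bool :=
  [&& ksep X, Tstrong X & Tstrong (~: X)].

Definition Tequiv (X X' : {set E}) : bool :=
  ((fcl X == fcl X') && (fcl (~: X) == fcl (~: X'))) ||
  ((fcl X == fcl (~: X')) && (fcl (~: X) == fcl X')).

Definition Tsequential (X : {set E}) : bool :=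
  [&& ksep X, Tstrong (~: X) & fcl (~: X) == setT].

Variable S : {set {set E}}.

Definition S_admissible : Prop :=
  forall X, X \in S -> [&& ~~ Tsequential X, ksep X & Tstrong (~: X)].

Definition kS_sep (X : {set E}) : bool :=
  [&& ksep X, X \in S & ~: X \in S].

Definition tree_compatible : Prop :=
  S_admissible /\
  (forall X X', kS_sep X -> Tstrong_ksep X' -> Tequiv X X' -> kS_sep X') /\
  (forall X Y, X \in S -> Tstrong_ksep Y -> X \subset Y -> Y \in S).

(* k-flowers in T, given as the sequence of petals (P_1, ..., P_n) *)
Definition kflower (P : seq {set E}) : Prop :=
  let n := size P in
  [/\ (0 < n)%N,
      (forall i, (i < n)%N -> nth set0 P i != set0),
      (forall i j, (i < n)%N -> (j < n)%N -> i != j ->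
                   [disjoint nth set0 P i & nth set0 P j]),
      (\bigcup_(Q <- P) Q = setT)
    & [/\ (forall i, (i < n)%N -> Tstrong (nth set0 P i)),
           (forall i, (i < n)%N -> ksep (nth set0 P i))
         & (forall i, (i < n)%N ->
              ksep (nth set0 P i :|: nth set0 P ((i.+1) %% n)%N))]].

Definition displays (P : seq {set E}) (X : {set E}) : Prop :=
  exists m : bitseq, X = \bigcup_(Q <- mask m P) Q.

Definition flower_le (P1 P2 : seq {set E}) : Prop :=
  forall X, displays P1 X -> kS_sep X ->
    exists X', [/\ displays P2 X', kS_sep X' & Tequiv X X'].

Definition flower_equiv (P1 P2 : seq {set E}) : Prop :=
  flower_le P1 P2 /\ flower_le P2 P1.

Definition S_tight (P : seq {set E}) : Prop :=
  ~ exists P', [/\ kflower P', (size P' < size P)%N & flower_equiv P P'].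

Definition S_maximal (P : seq {set E}) : Prop :=
  forall P', kflower P' -> flower_le P P' -> flower_le P' P.

End Tangles.

(* The separations that a flower displays are recorded, up to T-equivalence,
   by the finite set of (k,S)-separations T-equivalent to one of them; the
   preorder on flowers is inclusion of these sets.  Starting from the
   two-petal flower (R, E - R), take among the flowers above it one whose set
   is largest (this gives S-maximality) and, among those, one with fewest
   petals (this gives S-tightness). *)
From mathcomp Require Import all_boot all_order all_algebra.
From mathcomp Require Import zify boolp.
Set Implicit Arguments. Unset Strict Implicit. Unset Printing Implicit Defensive.
Local Open Scope ring_scope.

Section TangleSeparations.
Variables (E : finType) (lam : {set E} -> int) (k : int).
Variables (T S : {set {set E}}).

Local Notation Tequiv := (Tequiv lam k T).
Local Notation kS_sep := (kS_sep lam k S).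
Local Notation kflower := (kflower lam k T).
Local Notation flower_le := (flower_le lam k T S).

Lemma Tequiv_refl (X : {set E}) : Tequiv X X.
Proof. by rewrite /Tequiv !eqxx. Qed.

Lemma Tequiv_sym (X Y : {set E}) : Tequiv X Y -> Tequiv Y X.
Proof.
by rewrite /Tequiv => /orP[]/andP[/eqP-> /eqP->]; rewrite !eqxx ?orbT.
Qed.

Lemma Tequiv_trans (X Y Z : {set E}) : Tequiv X Y -> Tequiv Y Z -> Tequiv X Z.
Proof.
rewrite /Tequiv => /orP[]/andP[/eqP h1 /eqP h2] /orP[]/andP[/eqP<- /eqP<-];
  by rewrite h1 h2 !eqxx ?orbT.
Qed.

Definition displayed_classes (P : seq {set E}) : {set {set E}} :=
  [set Y | kS_sep Y &&
     `[< exists X, [/\ displays P X, kS_sep X & Tequiv X Y] >]].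

Lemma flower_leE (P1 P2 : seq {set E}) :
  flower_le P1 P2 <-> displayed_classes P1 \subset displayed_classes P2.
Proof.
split=> [le12 | /subsetP sub12 X dX sX].
  apply/subsetP => Y; rewrite !inE => /andP[-> /asboolP[X [dX sX eXY]]].
  have [X' [dX' sX' eXX']] := le12 X dX sX.
  by apply/asboolP; exists X'; split=> //; apply: Tequiv_trans (Tequiv_sym eXX') eXY.
have : X \in displayed_classes P1.
  by rewrite inE sX; apply/asboolP; exists X; split=> //; apply: Tequiv_refl.
move/sub12; rewrite inE => /andP[_ /asboolP[X' [dX' sX' eX'X]]].
by exists X'; split=> //; apply: Tequiv_sym.
Qed.

Lemma flower_le_refl (P : seq {set E}) : flower_le P P.
Proof. exact/flower_leE. Qed.

Lemma flower_le_trans (P1 P2 P3 : seq {set E}) :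
  flower_le P1 P2 -> flower_le P2 P3 -> flower_le P1 P3.
Proof.
by move=> /flower_leE sub12 /flower_leE sub23; apply/flower_leE/(subset_trans sub12).
Qed.

Section MaximalFlower.
Variable P0 : seq {set E}.
Hypothesis flower_P0 : kflower P0.

Let above (P : seq {set E}) := kflower P /\ flower_le P0 P.

Lemma exists_max_classes : exists2 N, exists2 P, above P & #|displayed_classes P| = N
  & forall P, above P -> (#|displayed_classes P| <= N)%N.
Proof.
have ex : exists n, `[< exists2 P, above P & #|displayed_classes P| = n >].
  by exists #|displayed_classes P0|; apply/asboolP; exists P0 => //;
    split=> //; apply: flower_le_refl.
have ub n : `[< exists2 P, above P & #|displayed_classes P| = n >] ->
    (n <= #|{set E}|)%N by move=> /asboolP[P _ <-]; apply: max_card.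
case: (ex_maxnP ex ub) => N /asboolP maxN le_N.
by exists N => // P aP; apply: le_N; apply/asboolP; exists P.
Qed.

Lemma exists_tight_maximal_flower :
  exists P, [/\ kflower P, S_tight lam k T S P, S_maximal lam k T S P
              & flower_le P0 P].
Proof.
have [N exN maxN] := exists_max_classes.
pose fewest n := `[< exists P, [/\ above P, #|displayed_classes P| = N & size P = n] >].
have [|m /asboolP[P [[flP le0P] cardP sizeP] min_m]] := ex_minnP (P := fewest).
  by case: exN => P aP cardP; exists (size P); apply/asboolP; exists P.
have aboveP P' : flower_le P P' -> kflower P' -> above P'.
  by move=> leP' flP'; split=> //; apply: flower_le_trans leP'.
have same_classes P' : kflower P' -> flower_le P P' ->
    displayed_classes P' = displayed_classes P.
  move=> flP' leP'; have /flower_leE subP' := leP'.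
  apply/esym/eqP; rewrite eqEcard subP' cardP /=.
  exact: maxN (aboveP P' leP' flP').
exists P; split=> // [[P' [flP' ltP' [leP' _]]] | P' flP' leP'].
  have : fewest (size P').
    by apply/asboolP; exists P'; rewrite same_classes //; split=> //; apply: aboveP.
  by move/min_m; rewrite -sizeP leqNgt ltP'.
by apply/flower_leE; rewrite same_classes.
Qed.

End MaximalFlower.
End TangleSeparations.

Section TwoPetalFlower.
Variables (E : finType) (lam : {set E} -> int) (k : int).
Variables (T S : {set {set E}}).
Hypotheses (conn : connectivity_system lam) (tangT : tangle lam k T).

Lemma Tstrong_setT : Tstrong T setT.
Proof.
case: tangT => _ _ noCover _.
apply/existsP => -[A /andP[AT]]; rewrite subTset => /eqP eA.
by have := noCover A A A AT AT AT; rewrite eA !setUid eqxx.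
Qed.

Lemma fcl_setT : fcl lam k T setT = setT.
Proof.
apply/setP => x; rewrite inE; apply/bigcapP => Z /andP[_].
by rewrite subTset => /eqP->; rewrite inE.
Qed.

(* Otherwise E - X = E, which is T-strong with fcl E = E, so X is sequential. *)
Lemma nonsequential_neq0 (X : {set E}) :
  ~~ Tsequential lam k T X -> ksep lam k X -> X != set0.
Proof.
move=> nseqX kX; apply: contraNneq nseqX => X0.
by rewrite /Tsequential kX X0 setC0 Tstrong_setT fcl_setT eqxx.
Qed.

Lemma lam_setT_le (X : {set E}) : lam setT <= lam X.
Proof.
case: conn => sym submod.
have := submod X (~: X); rewrite setICr setUCr (sym set0) setC0 -sym.
lia.
Qed.

Lemma kflower_separation (R : {set E}) :
  S_admissible lam k T S -> kS_sep lam k S R -> kflower lam k T [:: R; ~: R].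
Proof.
move=> adm /and3P[kR RS cRS].
have /and3P[nseqR _ strcR] := adm R RS.
have /and3P[nseqcR kcR strR] := adm _ cRS; rewrite setCK in strR.
have kT : ksep lam k setT by move: kR (lam_setT_le R); rewrite /ksep; lia.
split=> //.
- by case=> [|[|i]] //= _; apply: nonsequential_neq0.
- by case=> [|[|i]] [|[|j]] //= _ _ _; rewrite disjoints_subset ?setCK.
- by rewrite big_cons big_seq1 setUCr.
- by split; case=> [|[|i]] //= _; rewrite ?setUCr 1?setUC ?setUCr.
Qed.

End TwoPetalFlower.

Theorem lemma6p2 (E : finType) (lam : {set E} -> int) (k : int)
  (T S : {set {set E}}) :
  connectivity_system lam ->
  tangle lam k T ->
  tree_compatible lam k T S ->
  forall R : {set E}, kS_sep lam k S R ->
  exists P : seq {set E},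
    [/\ kflower lam k T P, S_tight lam k T S P, S_maximal lam k T S P &
        exists X : {set E},
          [/\ displays P X, kS_sep lam k S X & Tequiv lam k T X R]].
Proof.
move=> conn tangT [adm _] R sepR.
have flR := kflower_separation conn tangT adm sepR.
have [P [flP tightP maxP leRP]] := exists_tight_maximal_flower S flR.
exists P; split=> //.
have dispR : displays [:: R; ~: R] R by exists [:: true; false]; rewrite /= big_seq1.
have [X [dX sX eRX]] := leRP R dispR sepR.
by exists X; split=> //; apply: Tequiv_sym.
Qed.
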